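(* Let $p$ be a prime and let $H$ be a finite non-abelian group whose order is not divisible by $p$. Let $W\cong H\wr C$ where $C$ is cyclic of order $p$ (the regular wreath product, with base group $H^p$ permuted cyclically by $C$), and let $x\in W$ have order $p$. Then there exists $w\in W$ such that $x^w x$ is not a $p$-element. *)

From HB Require Import structures.
From mathcomp Require Import all_boot all_algebra all_fingroup all_solvable.
Set Implicit Arguments. Unset Strict Implicit. Unset Printing Implicit Defensive.
Import GRing.Theory.

(* Regular wreath product  H wr C_p  of a finite group H (a finGroupType)   *)
(* by the cyclic group C_p = 'Z_p (additive group of integers mod p; for     *)
(* p prime, 'Z_p has exactly p elements).  An element (f, c) stands for the  *)
(* product f * c of a base element f : H^p (a function 'Z_p -> H) and the   *)
(* top element c; c permutes the p coordinates of the base group cyclically. *)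

Section Wreath.
Variables (gT : finGroupType) (p : nat).

Definition wreath := ({ffun 'Z_p -> gT} * 'Z_p)%type.
HB.instance Definition _ := Finite.on wreath.

Definition wr_mul (x y : wreath) : wreath :=
  ([ffun i => (x.1 i * y.1 (i - x.2)%R)%g], (x.2 + y.2)%R).
Definition wr_one : wreath := ([ffun=> 1%g], 0%R).
Definition wr_inv (x : wreath) : wreath :=
  ([ffun i => ((x.1 (i + x.2)%R)^-1)%g], (- x.2)%R).

Lemma wr_mulA : associative wr_mul.
Proof.
move=> [f c] [g d] [h e]; rewrite /wr_mul /=; congr (_, _); last by rewrite addrA.
by apply/ffunP=> i; rewrite !ffunE mulgA opprD addrA.
Qed.

Lemma wr_mul1 : left_id wr_one wr_mul.
Proof.
move=> [f c]; rewrite /wr_mul /=; congr (_, _); last by rewrite add0r.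
by apply/ffunP=> i; rewrite !ffunE mul1g subr0.
Qed.

Lemma wr_mulV : left_inverse wr_one wr_inv wr_mul.
Proof.
move=> [f c]; rewrite /wr_mul /wr_one /=; congr (_, _); last by rewrite addNr.
by apply/ffunP=> i; rewrite !ffunE opprK mulVg.
Qed.

HB.instance Definition _ := Finite_isGroup.Build wreath wr_mulA wr_mul1 wr_mulV.

End Wreath.

(* A nontrivial p-element of W = H wr C_p is conjugate into the Sylow subgroup
   generated by the top generator (since p does not divide |H|, |W|_p = p), so we
   may take x = (1, d) with d <> 0.  For a base element h,
   (1, d) ^ h * (1, d) = (i |-> h_i^-1 h_(i-d), 2d), and a p-element of W with
   trivial top component is trivial, again because p does not divide |H|.  Take
   h_0 = a, h_(-d) = b and h_i = 1 elsewhere, with a and b not commuting.  For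
   p = 2 the product itself has trivial top component but coordinate 0 equal to
   a^-1 b <> 1.  For odd p its p-th power has trivial top component, and its
   coordinate 0 is an alternating product along the orbit of -d that equals
   a^-1 b a b^-1 <> 1. *)

From HB Require Import structures.
From mathcomp Require Import all_boot all_algebra all_fingroup all_solvable.
From mathcomp Require Import ring zify.
Set Implicit Arguments. Unset Strict Implicit. Unset Printing Implicit Defensive.
Import GRing.Theory.
Local Open Scope ring_scope.

Lemma eqZp_nat (p m n : nat) : (1 < p)%N -> ((m%:R : 'Z_p) == n%:R) = (m == n %[mod p]).
Proof. by move=> p_gt1; rewrite -val_eqE /= !val_Zp_nat. Qed.

Lemma unitZp_prime (p : nat) (d : 'Z_p) : prime p -> (d \is a GRing.unit) = (d != 0).
Proof.
move=> p_pr; have p_gt1 := prime_gt1 p_pr.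
have d_lt_p : (d < p)%N by rewrite -[X in (_ < X)%N](Zp_cast p_gt1).
rewrite -(natr_Zp d) unitZpE // prime_coprime // natr_Zp -val_eqE /=.
by rewrite /dvdn modn_small.
Qed.

Lemma eqZp_mulrn (p m n : nat) (d : 'Z_p) : prime p -> d != 0 ->
  (d *+ m == d *+ n) = (m == n %[mod p]).
Proof.
move=> p_pr d_neq0; rewrite -unitZp_prime // in d_neq0.
by rewrite -(mulr_natl d m) -(mulr_natl d n) (inj_eq (mulIr d_neq0)) eqZp_nat ?prime_gt1.
Qed.

Section AlternatingProduct.
Variables (gT : finGroupType) (p : nat) (a b : gT).
Local Open Scope nat_scope.

(* [ab_mod n] is the coordinate h_(-nd) of the base element h chosen in
   [wr_top_conj_mul_not_pelt]. *)
Definition ab_mod (n : nat) : gT :=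
  if n %% p == 0 then a else if n %% p == 1 then b else 1%g.

Lemma ab_mod_id n : 1 < n %% p -> ab_mod n = 1%g.
Proof. by rewrite /ab_mod; case: (n %% p) => [|[|]]. Qed.

Lemma prod_ab_mod_odd : odd p -> 1 < p ->
  (\prod_(j < p) ((ab_mod j.*2)^-1 * ab_mod j.*2.+1) = a^-1 * b * a * b^-1)%g.
Proof.
move=> p_odd p_gt1; set m := p./2.
have pE : p = m.*2.+1 by rewrite -[LHS](odd_double_half p) p_odd.
have m_gt0 : 0 < m by lia.
have mod_small_shift n : p <= n < p + p -> n %% p = n - p.
  by move=> /andP[h1 h2]; rewrite -{1}(subnK h1) modnDr modn_small //; lia.
pose K j := ((ab_mod j.*2)^-1 * ab_mod j.*2.+1)%g.
rewrite -(big_mkord xpredT K) (big_cat_nat (n := m)) //; last by lia.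
rewrite big_ltn // big_nat_cond big1; last first.
  move=> j /andP[/andP[j_gt0 j_lt] _].
  by rewrite /K !ab_mod_id ?invg1 ?mulg1 // modn_small; lia.
rewrite (big_ltn (m := m)); last by lia.
rewrite (big_ltn (m := m.+1)); last by lia.
rewrite big_nat_cond big1; last first.
  move=> j /andP[/andP[j_gt j_lt] _].
  by rewrite /K !ab_mod_id ?invg1 ?mulg1 // mod_small_shift; lia.
rewrite /K (ab_mod_id (n := m.*2)); last by rewrite modn_small; lia.
rewrite (ab_mod_id (n := m.+1.*2.+1)); last by rewrite mod_small_shift; lia.
rewrite /ab_mod /= mod0n (modn_small p_gt1) (mod_small_shift m.+1.*2); last by lia.
have -> : m.*2.+1 %% p = 0 by rewrite -pE modnn.
have -> : m.+1.*2 - p = 1 by lia.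
by rewrite /= !mulg1 invg1 mul1g !mulgA.
Qed.

End AlternatingProduct.

Section WreathProduct.
Variables (gT : finGroupType) (p : nat).
Local Notation W := (wreath gT p).
Implicit Types (x y z : W) (c : 'Z_p).

Lemma wr_mulgE x y : (x * y)%g = wr_mul x y. Proof. by []. Qed.
Lemma wr_invgE x : (x^-1)%g = wr_inv x. Proof. by []. Qed.

Lemma wr_expgE z n :
  (z ^+ n)%g = ([ffun i => (\prod_(j < n) z.1 (i - j%:R * z.2))%g], z.2 *+ n).
Proof.
elim: n => [|n IHn].
  by congr (_, _); apply/ffunP => i; rewrite !ffunE big_ord0.
rewrite expgS IHn wr_mulgE /wr_mul /=; congr (_, _); last by rewrite mulrS.
apply/ffunP => i; rewrite !ffunE big_ord_recl /= mul0r subr0; congr (_ * _)%g.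
by apply: eq_bigr => j _; congr (z.1 _); rewrite /bump /= add1n mulrS; ring.
Qed.

Definition wr_top c : W := ([ffun=> 1%g], c).

Lemma wr_top_expg c n : (wr_top c ^+ n)%g = wr_top (c *+ n).
Proof.
rewrite wr_expgE; congr (_, _); apply/ffunP => i.
by rewrite !ffunE big1 // => j _; rewrite ffunE.
Qed.

Lemma wr_top_conj_base_mul c (h : {ffun 'Z_p -> gT}) :
  (wr_top c ^ (h, 0) * wr_top c)%g = ([ffun i => ((h i)^-1 * h (i - c))%g], c + c).
Proof.
rewrite /conjg !wr_mulgE wr_invgE /wr_mul /wr_inv /=; congr (_, _); last by ring.
by apply/ffunP => i; rewrite !ffunE /= mul1g mulg1 oppr0 !subr0 addr0.
Qed.

Hypotheses (p_pr : prime p) (p'H : ~~ (p %| #|gT|)%N).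

Lemma card_wreath : #|{: W}| = (#|gT| ^ p * p)%N.
Proof. by rewrite card_prod card_ffun !card_ord Zp_cast ?prime_gt1. Qed.

Lemma order_wr_top1 : #[wr_top 1%R]%g = p.
Proof.
have p_gt1 := prime_gt1 p_pr.
have : (#[wr_top 1%R]%g %| p)%N.
  by rewrite order_dvdn wr_top_expg -mulr_natl pchar_Zp // mul0r.
case/primeP: p_pr => _ /[apply] /orP[|/eqP //].
by rewrite order_eq1 => /eqP/(congr1 snd)/eqP /=; rewrite oner_eq0.
Qed.

Lemma Sylow_wr_top : (p.-Sylow([set: W]) <[wr_top 1%R]>)%g.
Proof.
rewrite pHallE subsetT /= -orderE order_wr_top1 cardsT card_wreath.
have H_gt0 : (0 < #|gT|)%N by rewrite -cardsT cardG_gt0.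
rewrite partnM ?expn_gt0 ?H_gt0 ?prime_gt0 // partnX part_p'nat ?p'natE //.
by rewrite exp1n mul1n part_pnat_id ?pnat_id.
Qed.

Lemma pelt_conj_wr_top x : (p.-elt x)%g -> x != 1%g ->
  exists v c, c != 0 /\ (x ^ v)%g = wr_top c.
Proof.
move=> px x_neq1.
have [v _ sxvt] := Sylow_Jsub Sylow_wr_top (subsetT <[x]>%G) px.
have /cycleP[k xvE] : (x ^ v \in <[wr_top 1%R]>)%g.
  by apply: (subsetP sxvt); rewrite memJ_conjg cycle_id.
exists v, (1 *+ k); split; last by rewrite xvE wr_top_expg.
by apply: contra x_neq1 => /eqP k0; rewrite -(conjg_eq1 x v) xvE wr_top_expg k0.
Qed.

Lemma wr_base_pelt_eq1 z : z.2 = 0 -> (p.-elt z)%g -> z = 1%g.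
Proof.
move=> z2_0 pz; apply/eqP; rewrite -order_eq1; apply/eqP/(pnat_1 pz).
have : (z ^+ #|gT|)%g = 1%g.
  rewrite wr_expgE z2_0 mul0rn; congr (_, _); apply/ffunP => i; rewrite !ffunE.
  under eq_bigr do rewrite mulr0 subr0.
  by rewrite big_const_ord iter_mulg_1 -cardsT (expg_cardG (in_setT _)).
by move/eqP; rewrite -order_dvdn => /pnat_dvd; apply; rewrite p'natE.
Qed.

Lemma wr_top_conj_mul_not_pelt (d : 'Z_p) (a b : gT) :
  d != 0 -> (a * b != b * a)%g -> exists u : W, ~~ (p.-elt (wr_top d ^ u * wr_top d))%g.
Proof.
move=> d_neq0 nab; have p_gt1 := prime_gt1 p_pr.
pose g := [ffun i : 'Z_p => if i == 0 then a else if i == - d then b else 1%g].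
exists (g, 0); rewrite wr_top_conj_base_mul; set y := (_, _).
have [p2 | p_odd] := even_prime p_pr.
  have y2_0 : y.2 = 0 by rewrite /= -mulr2n -mulr_natl -p2 pchar_Zp // mul0r.
  apply/negP => /(wr_base_pelt_eq1 y2_0) /(congr1 (fun z : W => z.1 0)).
  rewrite /= !ffunE eqxx sub0r oppr_eq0 (negbTE d_neq0) eqxx => /eqP.
  by rewrite -eq_invg_mul invgK => /eqP ab; rewrite ab eqxx in nab.
have gE n : g (- (d *+ n)) = ab_mod p a b n.
  have at0 : (- (d *+ n) == 0) = (n %% p == 0)%N.
    by rewrite oppr_eq0 -(mulr0n d) eqZp_mulrn // mod0n.
  have at1 : (- (d *+ n) == - d) = (n %% p == 1)%N.
    by rewrite eqr_opp -{2}(mulr1n d) eqZp_mulrn // (modn_small p_gt1).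
  by rewrite ffunE at0 at1.
have idx_even j : 0 - j%:R * (d + d) = - (d *+ j.*2).
  by rewrite -(mulr_natr d) -muln2 natrM; ring.
have idx_odd j : - (d *+ j.*2) - d = - (d *+ j.*2.+1) by rewrite mulrSr opprD.
apply/negP => /(p_eltX p) /wr_base_pelt_eq1.
rewrite wr_expgE /= -mulr_natr pchar_Zp // mulr0 => /(_ erefl).
move=> /(congr1 (fun z : W => z.1 0)) /=; rewrite !ffunE.
under eq_bigr => j _ do rewrite ffunE idx_even idx_odd !gE.
rewrite prod_ab_mod_odd // => /eqP.
have -> : (a^-1 * b * a * b^-1 = [~ a, b^-1])%g by rewrite /commg /conjg invgK !mulgA.
by move/commgP/commuteV; rewrite invgK => ab_comm; rewrite ab_comm eqxx in nab.
Qed.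

End WreathProduct.

Local Close Scope ring_scope.

Theorem lemma2p1 (p : nat) (gT : finGroupType) :
  prime p ->
  ~~ abelian [set: gT] ->
  ~~ (p %| #|[set: gT]|) ->
  forall x : wreath gT p, #[x]%g = p ->
  exists w : wreath gT p, ~~ (p.-elt (x ^ w * x))%g.
Proof.
move=> p_pr nabH p'H x ox; rewrite cardsT in p'H.
have [a [b nab]] : exists a b : gT, (a * b != b * a)%g.
  have [[a b] /= nab | comm] := pickP (fun ab : gT * gT => ab.1 * ab.2 != ab.2 * ab.1)%g.
    by exists a, b.
  case/negP: nabH; apply/centsP => a _ b _.
  by apply/eqP/negbFE; apply: (comm (a, b)).
have px : (p.-elt x)%g by rewrite /p_elt ox pnat_id.
have x_neq1 : x != 1%g by rewrite -order_gt1 ox prime_gt1.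
have [v [d [d_neq0 xvE]]] := pelt_conj_wr_top p_pr p'H px x_neq1.
have [u not_pu] := wr_top_conj_mul_not_pelt p_pr p'H d_neq0 nab.
exists (v * u * v^-1)%g; rewrite -(p_eltJ _ _ v) conjMg -!conjgM.
by rewrite mulgKV conjgM xvE.
Qed.
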